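(* Let $D$ be a restricted double extended meta-interpreter, $P$ a definite program, $Q_0$ an atomic query of the language of $P$, and $v_1,\dots,v_n$ terms such that the query $\mathit{solve}(Q_0,v_1,\dots,v_n)$ is restricted. Then for every call $\mathit{solve}(Q,u_1,\dots,u_n)\in\mathrm{Call}(D\cup\mathit{ce}^D(P),\mathit{solve}(Q_0,v_1,\dots,v_n))$ and every (renamed apart) clause $\mathit{solve}(H,t_1,\dots,t_n)\leftarrow B_1,\dots,B_k$ of $D$, the sequence $(u_1,\dots,u_n)$ is unifiable with $(t_1,\dots,t_n)$.
   Context: Logic programs are definite; LD-derivations use the leftmost selection rule. $\mathrm{Call}(P,S)$ is the set of atoms $A$ such that a variant of $A$ is a selected atom in some branch of the LD-tree of $P\cup\{Q\}$ for some $Q\in S$. $\mathit{Vars}_n$ denotes the set of linear sequences (all variables distinct) of $n$ free variables. A double extended meta-interpreter is a definite program consisting of three clauses of the form $\mathit{solve}(\mathit{true},t_{11},\dots,t_{1n})\leftarrow C_{11},\dots,C_{1m_1}.$ $\mathit{solve}((A,B),t_{21},\dots,t_{2n})\leftarrow D_{11},\dots,D_{1k_1},\mathit{solve}(A,t_{31},\dots,t_{3n}),D_{21},\dots,D_{2k_2},\mathit{solve}(B,t_{41},\dots,t_{4n}),C_{21},\dots,C_{2m_2}.$ $\mathit{solve}(A,t_{51},\dots,t_{5n})\leftarrow D_{31},\dots,D_{3k_3},\mathit{clause}(A,B,s_1,\dots,s_k),D_{41},\dots,D_{4k_4},\mathit{solve}(B,t_{61},\dots,t_{6n}),C_{31},\dots,C_{3m_3}.$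 where $A,B$ are variables (the meta-variables), together with clauses defining the other predicates in the $C_{kl},D_{pq}$, none of which contain $\mathit{solve}$ or $\mathit{clause}$. A clause body $B_1,\dots,B_m$ is encoded as the term $(B_1,(B_2,\dots,B_m))$ with functor $,/2$, an empty body as $\mathit{true}$; $\mathit{ce}^D(P)$ is a set of facts $\mathit{clause}(H,B,s_1,\dots,s_k)$ with exactly one such fact for each clause $H\leftarrow B$ of $P$ and no others. The symbols $,/2$, $\mathit{clause}$, $\mathit{solve}$ do not occur in the language of $P$. $D$ is restricted if: (i) for any computed answer of the preceding atoms in the clause, either the corresponding instances of $(t_{31},\dots,t_{3n})$, $(t_{41},\dots,t_{4n})$, $(t_{61},\dots,t_{6n})$ and $(s_1,\dots,s_k)$ are linear sequences of free variables, or $(t_{11},\dots,t_{1n})$, $(t_{21},\dots,t_{2n})$, $(t_{51},\dots,t_{5n})$ are linear sequences of free variables and for every program $P$ and every $\mathit{clause}(s,t,t_1,\dots,t_k)\in\mathit{ce}^D(P)$, $(t_1,\dots,t_k)$ is a linear sequence of free variables; (ii) for all $P$, all $Q$ and all terms $t_1,\dots,t_n$, no call to any $C_{kl}$ or $D_{pq}$ in $\mathrm{Call}(D\cup\mathit{ce}^D(P),\mathit{solve}(Q,t_1,\dots,t_n))$ fails; (iii) for every $i$, every instance $(D_{i1},\dots,D_{ik_i})\theta$ and every computed answer substitution $\sigma$ for it, $A\theta\sigma$ is identical to $A\theta$ and $B\theta\sigma$ is identical to $B\theta$. Given a restricted $D$, a query $\mathit{solve}(Q,v_1,\dots,v_n)$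 is restricted if either $(v_1,\dots,v_n)\in\mathit{Vars}_n$, or $(t_{11},\dots,t_{1n}),(t_{21},\dots,t_{2n}),(t_{51},\dots,t_{5n})\in\mathit{Vars}_n$. *)

From Stdlib Require Import List Arith.
Import ListNotations.
Set Implicit Arguments.

(* Terms and atoms.  A function/predicate symbol is a name (nat); its   *)
(* arity is the length of the argument list.  Atoms are terms [Fn p l]. *)
Inductive term : Type :=
| Var (x : nat)
| Fn (f : nat) (args : list term).

Definition subst_t := nat -> term.

Fixpoint subst (s : subst_t) (t : term) : term :=
  match t with
  | Var x => s x
  | Fn f ts => Fn f (map (subst s) ts)
  end.

Fixpoint vars (t : term) : list nat :=
  match t with
  | Var x => [x]
  | Fn _ ts => flat_map vars ts
  end.

Definition varsl (ts : list term) : list nat := flat_map vars ts.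

Fixpoint syms (t : term) : list (nat * nat) :=
  match t with
  | Var _ => []
  | Fn f ts => (f, length ts) :: flat_map syms ts
  end.

(* composition: first theta, then sigma *)
Definition comp (theta sigma : subst_t) : subst_t :=
  fun x => subst sigma (theta x).

Definition disjoint (l1 l2 : list nat) : Prop :=
  forall x, In x l1 -> ~ In x l2.

Definition is_varseq (n : nat) (ts : list term) : Prop :=
  length ts = n /\ (forall t, In t ts -> exists x, t = Var x) /\ NoDup ts.

Definition comma_sym : nat := 0.
Definition true_sym : nat := 1.
Definition solve_sym : nat := 2.
Definition clause_sym : nat := 3.

Definition true_t : term := Fn true_sym [].
Definition comma_t (a b : term) : term := Fn comma_sym [a; b].
Definition solve_at (A : term) (ts : list term) : term := Fn solve_sym (A :: ts).
Definition clause_at (A B : term) (ss : list term) : term :=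
  Fn clause_sym (A :: B :: ss).

Definition no_solve_clause (t : term) : Prop :=
  forall m, ~ In (solve_sym, m) (syms t) /\ ~ In (clause_sym, m) (syms t).

Definition object_term (t : term) : Prop :=
  ~ In (comma_sym, 2) (syms t) /\ no_solve_clause t.

Definition is_atom (t : term) : Prop := exists f ts, t = Fn f ts.

Definition clause : Type := (term * list term)%type.   (* head <- body *)
Definition program : Type := list clause.

Definition vars_cl (c : clause) : list nat := vars (fst c) ++ varsl (snd c).

Definition cl_inst (s : subst_t) (c : clause) : clause :=
  (subst s (fst c), map (subst s) (snd c)).

Definition variant (a b : term) : Prop :=
  exists s r, subst s a = b /\ subst r b = a.

Definition variant_cl (c d : clause) : Prop :=
  exists s r, cl_inst s c = d /\ cl_inst r d = c.

Definition object_program (P : program) : Prop :=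
  forall c, In c P ->
    is_atom (fst c) /\ object_term (fst c) /\
    forall b, In b (snd c) -> is_atom b /\ object_term b.

Fixpoint enc_body (bs : list term) : term :=
  match bs with
  | [] => true_t
  | [b] => b
  | b :: bs' => comma_t b (enc_body bs')
  end.

Definition unifier (s : subst_t) (a b : term) : Prop := subst s a = subst s b.

Definition mgu (theta : subst_t) (a b : term) : Prop :=
  unifier theta a b /\
  forall s, unifier s a b -> exists d, forall x, s x = subst d (theta x).

Inductive ld_step (P : program) : list term -> list term -> subst_t -> Prop :=
| ld_step_intro (A : term) (G : list term) (c : clause) (H : term)
    (B : list term) (theta : subst_t) :
    In c P -> variant_cl c (H, B) ->
    disjoint (vars_cl (H, B)) (varsl (A :: G)) ->
    mgu theta A H ->
    ld_step P (A :: G) (map (subst theta) (B ++ G)) theta.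

Inductive ld_derivn (P : program) : nat -> list term -> list term -> subst_t -> Prop :=
| ldn_refl (G : list term) : ld_derivn P 0 G G Var
| ldn_step (n : nat) (G G1 G2 : list term) (theta sigma : subst_t) :
    ld_step P G G1 theta -> ld_derivn P n G1 G2 sigma ->
    ld_derivn P (S n) G G2 (comp theta sigma).

Definition ld_deriv (P : program) (G G' : list term) (theta : subst_t) : Prop :=
  exists n, ld_derivn P n G G' theta.

Definition comp_answer (P : program) (G : list term) (sigma : subst_t) : Prop :=
  exists theta, ld_deriv P G [] theta /\
    forall x, (In x (varsl G) -> sigma x = theta x) /\
              (~ In x (varsl G) -> sigma x = Var x).

(* finite failure: the LD-tree is finite (bounded depth) without success *)
Definition finitely_fails (P : program) (G : list term) : Prop :=
  (exists N, forall n G' theta, ld_derivn P n G G' theta -> n <= N) /\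
  ~ (exists theta, ld_deriv P G [] theta).

Definition call_set (P : program) (Q : list term) (A : term) : Prop :=
  exists A' G theta, ld_deriv P Q (A' :: G) theta /\ variant A A'.

Record demi : Type := Demi {
  dn : nat;                 (* number n of extra arguments of solve *)
  dk : nat;                 (* number k of extra arguments of clause *)
  (* solve(true, t1) <- C1 *)
  tt1 : list term; CC1 : list term;
  (* solve((A,B), t2) <- D1, solve(A,t3), D2, solve(B,t4), C2 *)
  a2 : nat; b2 : nat;
  tt2 : list term; DD1 : list term; tt3 : list term; DD2 : list term;
  tt4 : list term; CC2 : list term;
  (* solve(A, t5) <- D3, clause(A,B,s), D4, solve(B,t6), C3 *)
  a3 : nat; b3 : nat;
  tt5 : list term; DD3 : list term; ss : list term; DD4 : list term;
  tt6 : list term; CC3 : list term;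
  (* clauses defining the other predicates *)
  aux : program;
  (* the extra arguments s_1..s_k of the fact of ce^D(P) for clause c of P *)
  ce_args : program -> clause -> list term
}.

Definition cl1 (D : demi) : clause := (solve_at true_t (tt1 D), CC1 D).
Definition cl2 (D : demi) : clause :=
  (solve_at (comma_t (Var (a2 D)) (Var (b2 D))) (tt2 D),
   DD1 D ++ [solve_at (Var (a2 D)) (tt3 D)] ++ DD2 D ++
   [solve_at (Var (b2 D)) (tt4 D)] ++ CC2 D).
Definition cl3 (D : demi) : clause :=
  (solve_at (Var (a3 D)) (tt5 D),
   DD3 D ++ [clause_at (Var (a3 D)) (Var (b3 D)) (ss D)] ++ DD4 D ++
   [solve_at (Var (b3 D)) (tt6 D)] ++ CC3 D).

Definition solve_clauses (D : demi) : program := [cl1 D; cl2 D; cl3 D].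

Definition ce (D : demi) (P : program) : program :=
  map (fun c => (clause_at (fst c) (enc_body (snd c)) (ce_args D P c), [])) P.

Definition prog (D : demi) (P : program) : program :=
  solve_clauses D ++ aux D ++ ce D P.

Definition cd_atoms (D : demi) : list term :=
  CC1 D ++ CC2 D ++ CC3 D ++ DD1 D ++ DD2 D ++ DD3 D ++ DD4 D.

Definition is_demi (D : demi) : Prop :=
  length (tt1 D) = dn D /\ length (tt2 D) = dn D /\ length (tt3 D) = dn D /\
  length (tt4 D) = dn D /\ length (tt5 D) = dn D /\ length (tt6 D) = dn D /\
  length (ss D) = dk D /\
  (forall P c, length (ce_args D P c) = dk D) /\
  a2 D <> b2 D /\ a3 D <> b3 D /\
  (forall C, In C (cd_atoms D) -> is_atom C /\ no_solve_clause C) /\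
  (forall c, In c (aux D) ->
     is_atom (fst c) /\ no_solve_clause (fst c) /\
     forall b, In b (snd c) -> is_atom b /\ no_solve_clause b).

(* body atoms of solve clauses that are not solve/clause atoms, i.e. the
   C_kl, D_pq *)
Definition not_solve_clause_atom (t : term) : Prop :=
  match t with
  | Fn f _ => f <> solve_sym /\ f <> clause_sym
  | Var _ => True
  end.

Definition args_free_after (D : demi) (c : clause) (pre ts : list term) (m : nat) : Prop :=
  forall P Q w theta sigma,
    is_varseq (dn D) w ->
    disjoint (varsl (Q :: w)) (vars_cl c) ->
    mgu theta (solve_at Q w) (fst c) ->
    comp_answer (prog D P) (map (subst theta) pre) sigma ->
    is_varseq m (map (fun t => subst sigma (subst theta t)) ts).

Definition restricted_i (D : demi) : Prop :=
  (args_free_after D (cl2 D) (DD1 D) (tt3 D) (dn D) /\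
   args_free_after D (cl2 D)
     (DD1 D ++ [solve_at (Var (a2 D)) (tt3 D)] ++ DD2 D) (tt4 D) (dn D) /\
   args_free_after D (cl3 D) (DD3 D) (ss D) (dk D) /\
   args_free_after D (cl3 D)
     (DD3 D ++ [clause_at (Var (a3 D)) (Var (b3 D)) (ss D)] ++ DD4 D)
     (tt6 D) (dn D))
  \/
  (is_varseq (dn D) (tt1 D) /\ is_varseq (dn D) (tt2 D) /\
   is_varseq (dn D) (tt5 D) /\
   forall P c, In c P -> is_varseq (dk D) (ce_args D P c)).

(* A call to the body atom
   C of (a variant of) a solve clause, used at goal S :: R with mgu theta,
   is C theta sigma where sigma is a computed answer of the instance of the
   atoms preceding C. *)
Definition restricted_ii (D : demi) : Prop :=
  forall P Q ts, length ts = dn D ->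
  forall S0 R theta0 c H B theta pre C post sigma,
    ld_deriv (prog D P) [solve_at Q ts] (S0 :: R) theta0 ->
    In c (solve_clauses D) -> variant_cl c (H, B) ->
    disjoint (vars_cl (H, B)) (varsl (S0 :: R)) ->
    mgu theta S0 H ->
    B = pre ++ C :: post -> not_solve_clause_atom C ->
    comp_answer (prog D P) (map (subst theta) pre) sigma ->
    ~ finitely_fails (prog D P) [subst sigma (subst theta C)].

Definition preserves_meta (D : demi) (Ds : list term) (a b : nat) : Prop :=
  forall P theta sigma,
    comp_answer (prog D P) (map (subst theta) Ds) sigma ->
    subst sigma (theta a) = theta a /\ subst sigma (theta b) = theta b.

Definition restricted_iii (D : demi) : Prop :=
  preserves_meta D (DD1 D) (a2 D) (b2 D) /\
  preserves_meta D (DD2 D) (a2 D) (b2 D) /\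
  preserves_meta D (DD3 D) (a3 D) (b3 D) /\
  preserves_meta D (DD4 D) (a3 D) (b3 D).

Definition restricted (D : demi) : Prop :=
  restricted_i D /\ restricted_ii D /\ restricted_iii D.

Definition restricted_query (D : demi) (v : list term) : Prop :=
  is_varseq (dn D) v \/
  (is_varseq (dn D) (tt1 D) /\ is_varseq (dn D) (tt2 D) /\
   is_varseq (dn D) (tt5 D)).

(* If the argument sequences t_1, t_2, t_5 of the heads are linear sequences
   of variables, so is the argument sequence of any variant of a head; renamed
   apart from the call and of the same length n (the arity of solve never
   changes along a derivation), it unifies with the call's arguments.
   Otherwise condition (i) holds in its first form and the query's arguments
   are variables, and we show by induction on the length of the derivation
   that every selected solve-call has a linear sequence of variables as
   arguments.  Such a call is the query itself, or is selected while refuting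
   the body of the solve-clause used in the first step.  As the other atoms
   never produce solve-calls, it then stems from one of the body atoms
   solve(A, t_3), solve(B, t_4), solve(B, t_6), instantiated by the answer
   computed for the atoms before it.  Condition (i) makes the arguments of
   that instance linear variables (the answer computed inside the whole goal
   differs from the one in (i) only by renaming apart the variables of the
   rest of the goal), and the induction hypothesis applies to the shorter
   derivation starting from it. *)

From Stdlib Require Import List Arith Lia.
Import ListNotations.
Set Implicit Arguments.

Fixpoint term_nested_ind (Pt : term -> Prop) (HV : forall x, Pt (Var x))
  (HF : forall f l, Forall Pt l -> Pt (Fn f l)) (t : term) : Pt t :=
  match t with
  | Var x => HV x
  | Fn f l =>
      HF f l ((fix go (l : list term) : Forall Pt l :=
                 match l with
                 | [] => Forall_nil _
                 | t :: l' => Forall_cons _ (term_nested_ind HV HF t) (go l')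
                 end) l)
  end.

Lemma subst_ext (s1 s2 : subst_t) (t : term) :
  (forall x, In x (vars t) -> s1 x = s2 x) -> subst s1 t = subst s2 t.
Proof.
  induction t as [x | f l IH] using term_nested_ind; simpl; intros Hx.
  - apply Hx; left; reflexivity.
  - f_equal. apply map_ext_in. intros t Ht.
    rewrite Forall_forall in IH. apply IH; [exact Ht |].
    intros x Hxt. apply Hx, in_flat_map. eauto.
Qed.

Lemma map_subst_ext (s1 s2 : subst_t) (l : list term) :
  (forall x, In x (varsl l) -> s1 x = s2 x) -> map (subst s1) l = map (subst s2) l.
Proof.
  intros Hx. apply map_ext_in. intros t Ht. apply subst_ext.
  intros x Hxt. apply Hx, in_flat_map. eauto.
Qed.

Lemma subst_comp (s1 s2 : subst_t) (t : term) :
  subst s2 (subst s1 t) = subst (comp s1 s2) t.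
Proof.
  induction t as [x | f l IH] using term_nested_ind; simpl; [reflexivity |].
  f_equal. rewrite map_map. apply map_ext_in. intros t Ht.
  rewrite Forall_forall in IH. apply IH, Ht.
Qed.

Lemma map_subst_comp (s1 s2 : subst_t) (l : list term) :
  map (subst s2) (map (subst s1) l) = map (subst (comp s1 s2)) l.
Proof. rewrite map_map. apply map_ext. intros t. apply subst_comp. Qed.

Lemma subst_Var (t : term) : subst Var t = t.
Proof.
  induction t as [x | f l IH] using term_nested_ind; simpl; [reflexivity |].
  f_equal. rewrite <- (map_id l) at 2. apply map_ext_in. intros t Ht.
  rewrite Forall_forall in IH. apply IH, Ht.
Qed.

Lemma map_subst_Var (l : list term) : map (subst Var) l = l.
Proof. rewrite <- (map_id l) at 2. apply map_ext. apply subst_Var. Qed.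

Lemma in_vars_subst (s : subst_t) (t : term) (z : nat) :
  In z (vars (subst s t)) <-> exists x, In x (vars t) /\ In z (vars (s x)).
Proof.
  induction t as [x | f l IH] using term_nested_ind; simpl.
  - split; [eauto | intros [y [[<- | []] Hz]]; exact Hz].
  - rewrite Forall_forall in IH. rewrite in_flat_map. split.
    + intros [u [Hu Hz]]. apply in_map_iff in Hu. destruct Hu as [t [<- Ht]].
      apply IH in Hz; [| exact Ht]. destruct Hz as [x [Hx Hz]].
      exists x. split; [apply in_flat_map; eauto | exact Hz].
    + intros [x [Hx Hz]]. apply in_flat_map in Hx. destruct Hx as [t [Ht Hx]].
      exists (subst s t). split; [apply in_map, Ht | apply IH; eauto].
Qed.

Lemma in_varsl_map (s : subst_t) (l : list term) (z : nat) :
  In z (varsl (map (subst s) l)) <-> exists x, In x (varsl l) /\ In z (vars (s x)).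
Proof.
  unfold varsl. rewrite flat_map_concat_map, map_map, <- flat_map_concat_map, in_flat_map.
  split.
  - intros [t [Ht Hz]]. apply in_vars_subst in Hz. destruct Hz as [x [Hx Hz]].
    exists x. split; [apply in_flat_map; eauto | exact Hz].
  - intros [x [Hx Hz]]. apply in_flat_map in Hx. destruct Hx as [t [Ht Hx]].
    exists t. split; [exact Ht | apply in_vars_subst; eauto].
Qed.

Lemma varsl_app (l1 l2 : list term) : varsl (l1 ++ l2) = varsl l1 ++ varsl l2.
Proof. apply flat_map_app. Qed.

Lemma subst_fixes_vars (s : subst_t) (t : term) :
  subst s t = t -> forall x, In x (vars t) -> s x = Var x.
Proof.
  induction t as [x | f l IH] using term_nested_ind; simpl; intros E y Hy.
  - destruct Hy as [<- | []]. exact E.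
  - injection E as E. rewrite Forall_forall in IH.
    apply in_flat_map in Hy. destruct Hy as [t [Ht Hy]].
    apply (IH t Ht); [| exact Hy].
    rewrite <- (map_id l) in E at 2.
    exact (proj1 map_ext_in_iff E t Ht).
Qed.

Lemma is_varseq_map_inv (n : nat) (s : subst_t) (l : list term) :
  is_varseq n (map (subst s) l) -> is_varseq n l.
Proof.
  intros [Hlen [Hvar Hnd]]. rewrite length_map in Hlen.
  split; [exact Hlen | split].
  - intros [x | f ts] Ht; [eauto |].
    destruct (Hvar (subst s (Fn f ts))) as [y Hy]; [apply in_map, Ht | discriminate].
  - exact (NoDup_map_inv _ _ Hnd).
Qed.

Lemma varseq_match (a b : list term) :
  (forall t, In t a -> exists x, t = Var x) -> NoDup a -> length a = length b ->
  exists sg, map (subst sg) a = b /\ forall y, ~ In y (varsl a) -> sg y = Var y.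
Proof.
  revert b. induction a as [| t a IH]; intros [| u b] Hvar Hnd Hlen; try discriminate.
  - exists Var. split; reflexivity.
  - injection Hlen as Hlen. inversion Hnd as [| ? ? Hta Hnd']; subst.
    destruct (IH b (fun t' H => Hvar t' (or_intror H)) Hnd' Hlen) as [sg [Esg Hsg]].
    destruct (Hvar t (or_introl eq_refl)) as [x ->].
    assert (Hx : ~ In x (varsl a)).
    { intros Hin. apply in_flat_map in Hin. destruct Hin as [t' [Ht' Hin]].
      destruct (Hvar t' (or_intror Ht')) as [x' ->].
      destruct Hin as [<- | []]. exact (Hta Ht'). }
    exists (fun y => if Nat.eqb y x then u else sg y). split.
    + simpl. rewrite Nat.eqb_refl. f_equal. rewrite <- Esg. apply map_subst_ext.
      intros y Hy. destruct (Nat.eqb_spec y x); [subst; contradiction | reflexivity].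
    + intros y Hy. destruct (Nat.eqb_spec y x) as [-> | _].
      { exfalso. apply Hy. left. reflexivity. }
      apply Hsg. intros Hin. apply Hy. right. exact Hin.
Qed.

Lemma varseq_unifiable (n : nat) (a b : list term) :
  is_varseq n a -> length b = n ->
  (forall x, In x (varsl a) -> ~ In x (varsl b)) ->
  exists sg, map (subst sg) a = map (subst sg) b.
Proof.
  intros [Hlen [Hvar Hnd]] Hlb Hdis.
  destruct (varseq_match b Hvar Hnd ltac:(congruence)) as [sg [Esg Hsg]].
  exists sg. rewrite Esg, <- (map_subst_Var b) at 1. symmetry. apply map_subst_ext.
  intros x Hx. apply Hsg. intros Ha. exact (Hdis x Ha Hx).
Qed.

Lemma list_strict_bound (l : list nat) : exists M, forall z, In z l -> z < M.
Proof.
  exists (S (list_max l)). intros z Hz. apply le_n_S.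
  pose proof (proj1 (list_max_le l (list_max l)) (le_n _)) as Hle.
  rewrite Forall_forall in Hle. exact (Hle z Hz).
Qed.

(* The unifier that agrees with [th] except that it keeps [x] and renames [x]
   away everywhere else must factor through [th]. *)
Lemma mgu_outside_fresh (th : subst_t) (A H : term) (x : nat) :
  mgu th A H -> ~ In x (vars A) -> ~ In x (vars H) ->
  exists z, th x = Var z /\ forall y, y <> x -> ~ In z (vars (th y)).
Proof.
  intros [Hunif Hgen] HxA HxH.
  set (k := fun v => if Nat.eqb v x then Var (S x) else Var v).
  set (s := fun v => if Nat.eqb v x then Var x else subst k (th v)).
  assert (Hk : forall t, ~ In x (vars (subst k t))).
  { intros t Ht. apply in_vars_subst in Ht. destruct Ht as [v [_ Hv]]. unfold k in Hv.
    destruct (Nat.eqb_spec v x); destruct Hv as [Hv | []]; lia. }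
  assert (Hs : forall t, ~ In x (vars t) -> subst s t = subst k (subst th t)).
  { intros t Ht. rewrite subst_comp. apply subst_ext. intros v Hv. unfold s, comp.
    destruct (Nat.eqb_spec v x); [subst; contradiction | reflexivity]. }
  destruct (Hgen s) as [d Hd].
  { unfold unifier. rewrite (Hs A HxA), (Hs H HxH), Hunif. reflexivity. }
  pose proof (Hd x) as Hdx. unfold s in Hdx. rewrite Nat.eqb_refl in Hdx.
  destruct (th x) as [z |] eqn:Ez; [| discriminate].
  exists z. split; [reflexivity |]. intros y Hyx Hz.
  pose proof (Hd y) as Hdy. unfold s in Hdy. apply Nat.eqb_neq in Hyx. rewrite Hyx in Hdy.
  apply (Hk (th y)). rewrite Hdy. apply in_vars_subst. exists z.
  split; [exact Hz | simpl in Hdx; rewrite <- Hdx; left; reflexivity].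
Qed.

(* [theta] sends the variables outside [V] beyond every variable that [th]
   can produce, so that the factorisation through [theta] can be defined
   independently there. *)
Lemma mgu_rename (th ren ren' : subst_t) (A B : term) (V : list nat) :
  mgu th (subst ren A) (subst ren B) ->
  (forall x, In x (vars A) \/ In x (vars B) -> In x V) ->
  (forall x, In x V -> subst ren' (ren x) = Var x) ->
  exists theta, mgu theta A B /\ forall x, In x V -> theta x = subst th (ren x).
Proof.
  intros [Hunif Hgen] HV Hinv.
  destruct (list_strict_bound
              (V ++ flat_map (fun x => flat_map (fun y => vars (th y)) (vars (ren x))) V))
    as [M HM].
  assert (HMth : forall x y z, In x V -> In y (vars (ren x)) -> In z (vars (th y)) -> z < M).
  { intros x y z Hx Hy Hz. apply HM, in_or_app. right.
    apply in_flat_map. exists x. split; [exact Hx | apply in_flat_map; eauto]. }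
  assert (HMV : forall x, In x V -> x < M) by (intros x Hx; apply HM, in_or_app; left; exact Hx).
  exists (fun x => if in_dec Nat.eq_dec x V then subst th (ren x) else Var (x + M)).
  assert (Hon : forall t, (forall x, In x (vars t) -> In x V) ->
            subst (fun x => if in_dec Nat.eq_dec x V then subst th (ren x) else Var (x + M)) t
            = subst th (subst ren t)).
  { intros t Ht. rewrite subst_comp. apply subst_ext. intros x Hx. unfold comp.
    destruct (in_dec Nat.eq_dec x V); [reflexivity | exfalso; eauto]. }
  split; [split |].
  - unfold unifier. rewrite !Hon by eauto. exact Hunif.
  - intros s2 Hs2.
    destruct (Hgen (comp ren' s2)) as [d' Hd'].
    { assert (Hback : forall t, (forall x, In x (vars t) -> In x V) ->
                subst (comp ren' s2) (subst ren t) = subst s2 t).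
      { intros t Ht. rewrite subst_comp. apply subst_ext. intros x Hx. unfold comp at 1.
        rewrite <- subst_comp, Hinv by auto. reflexivity. }
      unfold unifier. rewrite !Hback by eauto. exact Hs2. }
    exists (fun z => if Nat.ltb z M then d' z else s2 (z - M)). intros x. cbv beta.
    destruct (in_dec Nat.eq_dec x V) as [Hx | Hx].
    + rewrite subst_comp. transitivity (subst s2 (subst ren' (ren x))).
      * rewrite Hinv by exact Hx. reflexivity.
      * rewrite subst_comp. apply subst_ext. intros y Hy. unfold comp.
        transitivity (subst d' (th y)); [exact (Hd' y) |]. apply subst_ext. intros z Hz.
        replace (Nat.ltb z M) with true; [reflexivity |].
        symmetry. apply Nat.ltb_lt. eauto.
    + simpl. replace (Nat.ltb (x + M) M) with false by (symmetry; apply Nat.ltb_ge; lia).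
      f_equal. lia.
  - intros x Hx. destruct (in_dec Nat.eq_dec x V); [reflexivity | contradiction].
Qed.

(* A [k]-step LD-refutation of [G] carried out inside the goal [G ++ R]: its
   clauses are renamed apart from [R] too, and [R] is left as
   [map (subst rho) R]. *)
Inductive ld_refute (P : program) : nat -> list term -> list term -> subst_t -> Prop :=
| ld_refute_nil (R : list term) : ld_refute P 0 [] R Var
| ld_refute_step (A : term) (G R : list term) (c : clause) (H : term) (B : list term)
    (th rho : subst_t) (k : nat) :
    In c P -> variant_cl c (H, B) ->
    disjoint (vars_cl (H, B)) (varsl (A :: G ++ R)) -> mgu th A H ->
    ld_refute P k (map (subst th) (B ++ G)) (map (subst th) R) rho ->
    ld_refute P (S k) (A :: G) R (comp th rho).

Lemma disjoint_goal_prefix (l : list nat) (A : term) (G R : list term) :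
  disjoint l (varsl (A :: G ++ R)) -> disjoint l (varsl (A :: G)).
Proof.
  intros Hdis x Hx HxG. apply (Hdis x Hx). change (A :: G ++ R) with ((A :: G) ++ R).
  rewrite varsl_app. apply in_or_app. left. exact HxG.
Qed.

Lemma ld_refute_derivn (P : program) (k : nat) (G R : list term) (rho : subst_t) :
  ld_refute P k G R rho -> ld_derivn P k G [] rho.
Proof.
  induction 1 as [R | A G R c H B th rho k Hc Hvar Hdis Hmgu _ IH]; [constructor |].
  apply ldn_step with (G1 := map (subst th) (B ++ G)); [| exact IH].
  exact (ld_step_intro _ _ Hc Hvar (disjoint_goal_prefix _ _ _ Hdis) Hmgu).
Qed.

Lemma ld_split (P : program) (n : nat) (G R : list term) (A : term) (X : list term)
    (tau : subst_t) :
  ld_derivn P n (G ++ R) (A :: X) tau ->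
  (exists G', ld_derivn P n G (A :: G') tau) \/
  (exists k rho tau', k <= n /\ ld_refute P k G R rho /\
     ld_derivn P (n - k) (map (subst rho) R) (A :: X) tau').
Proof.
  revert G R tau. induction n as [| n IH]; intros [| A0 G] R tau Hd.
  - right. exists 0, Var, tau. rewrite map_subst_Var.
    split; [lia | split; [constructor | exact Hd]].
  - left. inversion Hd; subst. exists G. constructor.
  - right. exists 0, Var, tau. rewrite map_subst_Var.
    split; [lia | split; [constructor | exact Hd]].
  - inversion Hd as [| ? ? G1 ? th sg Hstep Hrest]; subst.
    inversion Hstep as [? ? c H B ? Hc Hvar Hdis Hmgu]; subst.
    rewrite app_assoc, map_app in Hrest.
    destruct (IH _ _ _ Hrest) as [[G' HG'] | [k [rho [tau' [Hk [Href Hd']]]]]].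
    + left. exists G'. apply ldn_step with (G1 := map (subst th) (B ++ G)); [| exact HG'].
      exact (ld_step_intro _ _ Hc Hvar (disjoint_goal_prefix _ _ _ Hdis) Hmgu).
    + right. exists (S k), (comp th rho), tau'. rewrite <- map_subst_comp.
      repeat split; [lia | econstructor; eauto | exact Hd'].
Qed.

Lemma resolvent_context_var (A H : term) (G R B : list term) (th : subst_t) (x : nat) :
  disjoint (vars_cl (H, B)) (varsl (A :: G ++ R)) -> mgu th A H ->
  In x (varsl R) -> ~ In x (varsl (A :: G)) ->
  exists z, th x = Var z /\
    (In z (varsl (map (subst th) R)) /\ ~ In z (varsl (map (subst th) (B ++ G)))) /\
    forall y, y <> x -> ~ In z (vars (th y)).
Proof.
  intros Hdis Hmgu HxR HxG.
  assert (HxHB : ~ In x (vars_cl (H, B))).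
  { intros Hx. apply (Hdis x Hx). simpl. rewrite varsl_app.
    apply in_or_app. right. apply in_or_app. right. exact HxR. }
  destruct (mgu_outside_fresh x Hmgu) as [z [Ez Hz]].
  { intros Hx. apply HxG. apply in_or_app. left. exact Hx. }
  { intros Hx. apply HxHB. apply in_or_app. left. exact Hx. }
  exists z. split; [exact Ez | split; [split |]]; [| | exact Hz].
  - apply in_varsl_map. exists x. rewrite Ez. split; [exact HxR | left; reflexivity].
  - intros Hin. apply in_varsl_map in Hin. destruct Hin as [y [Hy Hzy]].
    apply (Hz y); [| exact Hzy]. intros ->. rewrite varsl_app in Hy.
    apply in_app_or in Hy as [Hy | Hy].
    + apply HxHB. apply in_or_app. right. exact Hy.
    + apply HxG. apply in_or_app. right. exact Hy.
Qed.

Definition renames_apart (V : nat -> Prop) (rho : subst_t) : Prop :=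
  (forall x, V x -> exists z, rho x = Var z) /\
  (forall x y, V x -> V y -> rho x = rho y -> x = y) /\
  (forall x y z, V x -> ~ V y -> rho x = Var z -> ~ In z (vars (rho y))).

Lemma ld_refute_renames_apart (P : program) (k : nat) (G R : list term) (rho : subst_t) :
  ld_refute P k G R rho ->
  renames_apart (fun x => In x (varsl R) /\ ~ In x (varsl G)) rho.
Proof.
  induction 1 as [R | A G R c H B th rho k Hc Hvar Hdis Hmgu _ [Iren [Iinj Ifresh]]].
  - split; [| split].
    + eauto.
    + intros x y _ _ E. injection E as E. exact E.
    + intros x y z Hx Hy E. injection E as <-. intros [-> | []]. exact (Hy Hx).
  - set (V' := fun z => In z (varsl (map (subst th) R)) /\
                        ~ In z (varsl (map (subst th) (B ++ G)))).
    assert (Hstep : forall x, In x (varsl R) /\ ~ In x (varsl (A :: G)) ->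
              exists z, th x = Var z /\ V' z /\ forall y, y <> x -> ~ In z (vars (th y)))
      by (intros x [HxR HxG]; exact (resolvent_context_var G R B x Hdis Hmgu HxR HxG)).
    split; [| split].
    + intros x Hx. destruct (Hstep x Hx) as [z [Ez [Hz _]]].
      unfold comp. rewrite Ez. exact (Iren z Hz).
    + intros x1 x2 Hx1 Hx2 E.
      destruct (Hstep x1 Hx1) as [z1 [Ez1 [Hz1 N1]]].
      destruct (Hstep x2 Hx2) as [z2 [Ez2 [Hz2 N2]]].
      unfold comp in E. rewrite Ez1, Ez2 in E.
      pose proof (Iinj _ _ Hz1 Hz2 E) as <-.
      destruct (Nat.eq_dec x1 x2) as [| Hne]; [assumption | exfalso].
      apply (N1 x2 (not_eq_sym Hne)). rewrite Ez2. left. reflexivity.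
    + intros x y z' Hx Hy E. destruct (Hstep x Hx) as [z [Ez [Hz N]]].
      unfold comp in *. rewrite Ez in E. simpl in E.
      intros Hin. apply in_vars_subst in Hin. destruct Hin as [w [Hw Hzw]].
      assert (Hwz : w <> z).
      { intros ->. apply (N y); [intros -> | exact Hw]. exact (Hy Hx). }
      assert (Vdec : V' w \/ ~ V' w).
      { unfold V'. destruct (in_dec Nat.eq_dec w (varsl (map (subst th) R))),
          (in_dec Nat.eq_dec w (varsl (map (subst th) (B ++ G)))); tauto. }
      destruct Vdec as [Tw | Tw].
      * destruct (Iren w Tw) as [w' Ew]. rewrite Ew in Hzw. destruct Hzw as [<- | []].
        apply Hwz, (Iinj _ _ Tw Hz). congruence.
      * exact (Ifresh z w z' Hz Tw E Hzw).
Qed.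

Lemma NoDup_map_transfer {A B C : Type} (f : A -> B) (g : A -> C) (l : list A) :
  NoDup (map f l) ->
  (forall a b, In a l -> In b l -> g a = g b -> f a = f b) -> NoDup (map g l).
Proof.
  induction l as [| a l IH]; simpl; intros Hnd Hfg; [constructor |].
  inversion Hnd as [| ? ? Hfa Hnd']; subst. constructor.
  - intros Hga. apply in_map_iff in Hga. destruct Hga as [b [Eb Hb]].
    apply Hfa. rewrite (Hfg a b (or_introl eq_refl) (or_intror Hb) (eq_sym Eb)).
    apply in_map, Hb.
  - apply IH; [exact Hnd' |]. intros a' b' Ha' Hb'. apply Hfg; right; assumption.
Qed.

Lemma ld_refute_keeps_varseq (P : program) (k m : nat) (G R L : list term)
    (rho sg : subst_t) :
  ld_refute P k G R rho ->
  (forall x, In x (varsl G) -> sg x = rho x) ->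
  (forall x, ~ In x (varsl G) -> sg x = Var x) ->
  (forall x, In x (varsl L) -> In x (varsl R)) ->
  is_varseq m (map (subst sg) L) -> is_varseq m (map (subst rho) L).
Proof.
  intros Href Hin Hout HLR Hsg.
  destruct (ld_refute_renames_apart Href) as [Hren [Hinj Hfresh]].
  destruct (is_varseq_map_inv _ _ Hsg) as [_ [HLvar _]].
  destruct Hsg as [Hlen [Hsgvar Hnd]].
  assert (HinL : forall x, In (Var x) L -> In x (varsl L)).
  { intros x Hx. apply in_flat_map. exists (Var x). split; [exact Hx | left; reflexivity]. }
  split; [rewrite length_map in *; exact Hlen | split].
  - intros t Ht. apply in_map_iff in Ht. destruct Ht as [a [<- Ha]].
    destruct (HLvar a Ha) as [x ->]. simpl.
    destruct (in_dec Nat.eq_dec x (varsl G)) as [HG | HG].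
    + rewrite <- Hin by exact HG. apply (Hsgvar (subst sg (Var x))), in_map, Ha.
    + apply Hren. split; [apply HLR, HinL, Ha | exact HG].
  - apply (NoDup_map_transfer _ _ _ Hnd). intros a b Ha Hb E.
    destruct (HLvar a Ha) as [x ->], (HLvar b Hb) as [y ->]. simpl in *.
    assert (HxR : In x (varsl R)) by (apply HLR, HinL, Ha).
    assert (HyR : In y (varsl R)) by (apply HLR, HinL, Hb).
    destruct (in_dec Nat.eq_dec x (varsl G)) as [HxG | HxG],
      (in_dec Nat.eq_dec y (varsl G)) as [HyG | HyG].
    + rewrite !Hin by assumption. exact E.
    + exfalso. destruct (Hren y (conj HyR HyG)) as [z Ez].
      apply (Hfresh y x z (conj HyR HyG)); [tauto | exact Ez |].
      rewrite E, Ez. left. reflexivity.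
    + exfalso. destruct (Hren x (conj HxR HxG)) as [z Ez].
      apply (Hfresh x y z (conj HxR HxG)); [tauto | exact Ez |].
      rewrite <- E, Ez. left. reflexivity.
    + rewrite (Hinj x y (conj HxR HxG) (conj HyR HyG) E). reflexivity.
Qed.

Definition atom_with (p : nat -> nat -> Prop) (a : term) : Prop :=
  exists f args, a = Fn f args /\ p f (length args).

Lemma atom_with_subst (p : nat -> nat -> Prop) (s : subst_t) (a : term) :
  atom_with p a -> atom_with p (subst s a).
Proof.
  intros [f [args [-> Hp]]]. exists f, (map (subst s) args).
  split; [reflexivity | rewrite length_map; exact Hp].
Qed.

Lemma Forall_atom_with_map (p : nat -> nat -> Prop) (s : subst_t) (l : list term) :
  Forall (atom_with p) l -> Forall (atom_with p) (map (subst s) l).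
Proof.
  intros Hl. apply Forall_map. exact (Forall_impl _ (fun a => @atom_with_subst p s a) Hl).
Qed.

Lemma atom_with_weaken (p q : nat -> nat -> Prop) (a : term) :
  (forall f n, p f n -> q f n) -> atom_with p a -> atom_with q a.
Proof.
  intros Hpq [f [args [-> Hp]]]. exists f, args. split; [reflexivity | exact (Hpq _ _ Hp)].
Qed.

Lemma ld_derivn_Forall_atom_with (p : nat -> nat -> Prop) (Pr : program) :
  (forall c, In c Pr -> is_atom (fst c)) ->
  (forall c f args, In c Pr -> fst c = Fn f args -> p f (length args) ->
     Forall (atom_with p) (snd c)) ->
  forall n G X th, ld_derivn Pr n G X th ->
  Forall (atom_with p) G -> Forall (atom_with p) X.
Proof.
  intros Hheads Hbodies n G X th Hd. induction Hd as [| n G G1 X th sg Hstep _ IH]; intros HG;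
    [exact HG |].
  apply IH. destruct Hstep as [A G c H B th Hc [s [r [E _]]] _ [Hunif _]].
  inversion HG as [| ? ? [f [args [-> Hp]]] HG']; subst.
  destruct (Hheads c Hc) as [f' [args' Ef]].
  destruct c as [h b]. injection E as EH EB. simpl in Ef. subst h H B.
  injection Hunif as -> Eargs.
  apply (f_equal (@length term)) in Eargs. rewrite !length_map in Eargs.
  rewrite map_app. apply Forall_app. split; [| exact (Forall_atom_with_map th HG')].
  apply Forall_atom_with_map, Forall_atom_with_map.
  apply (Hbodies _ _ _ Hc eq_refl). rewrite <- Eargs. exact Hp.
Qed.

Definition not_solve (f n : nat) : Prop := f <> solve_sym.

Definition solve_arity (d f n : nat) : Prop := f = solve_sym -> n = S d.

Lemma object_atom_not_solve (b : term) :
  is_atom b -> no_solve_clause b -> atom_with not_solve b.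
Proof.
  intros [f [ts ->]] Hb. exists f, ts. split; [reflexivity |]. intros ->.
  apply (proj1 (Hb (length ts))). left. reflexivity.
Qed.

Lemma subst_inverse_on_vars (s r : subst_t) (t : term) :
  subst r (subst s t) = t -> forall x, In x (vars t) -> exists z, s x = Var z /\ r z = Var x.
Proof.
  intros E x Hx. rewrite subst_comp in E. pose proof (subst_fixes_vars _ E x Hx) as Hsr.
  unfold comp in Hsr. destruct (s x) as [z |]; [eauto | discriminate].
Qed.

Lemma variant_cl_renaming (s r : subst_t) (c c' : clause) :
  cl_inst s c = c' -> cl_inst r c' = c ->
  forall x, In x (vars_cl c) -> exists z, s x = Var z /\ r z = Var x /\ In z (vars_cl c').
Proof.
  destruct c as [h b], c' as [h' b']. unfold cl_inst. simpl. intros E1 E2 x Hx.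
  injection E1 as E1h E1b. injection E2 as E2h E2b.
  assert (Epack : subst r (subst s (Fn 0 (h :: b))) = Fn 0 (h :: b)).
  { simpl. rewrite E1h, E2h, E1b, E2b. reflexivity. }
  destruct (subst_inverse_on_vars _ _ Epack x Hx) as [z [Ez Er]].
  exists z. split; [exact Ez | split; [exact Er |]].
  assert (Hz : In z (vars (subst s (Fn 0 (h :: b))))).
  { apply in_vars_subst. exists x. rewrite Ez. split; [exact Hx | left; reflexivity]. }
  simpl in Hz. rewrite E1h, E1b in Hz. exact Hz.
Qed.

Definition shift (M : nat) : subst_t := fun y => Var (y + M).

(* Condition (i) speaks of the clause itself and of a query renamed apart from
   it; this replays an actual resolution step, made with a variant of the
   clause, in that form. *)
Lemma standardize_apart (c : clause) (s r : subst_t) (H' : term) (B' : list term)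
    (A : term) (th : subst_t) :
  cl_inst s c = (H', B') -> cl_inst r (H', B') = c ->
  disjoint (vars_cl (H', B')) (vars A) -> mgu th A H' ->
  exists M theta, disjoint (vars (subst (shift M) A)) (vars_cl c) /\
    mgu theta (subst (shift M) A) (fst c) /\
    forall x, In x (vars_cl c) -> theta x = subst th (s x).
Proof.
  intros E1 E2 Hdis Hmgu.
  destruct (list_strict_bound (vars_cl c)) as [M HM].
  assert (Hshift : forall x, In x (vars (subst (shift M) A)) ->
             exists y, x = y + M /\ In y (vars A)).
  { intros x Hx. apply in_vars_subst in Hx. destruct Hx as [y [Hy [<- | []]]]. eauto. }
  set (ren := fun x => if in_dec Nat.eq_dec x (vars_cl c) then s x else Var (x - M)).
  set (ren' := fun y => if in_dec Nat.eq_dec y (vars_cl (H', B')) then r y else Var (y + M)).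
  assert (HrenA : subst ren (subst (shift M) A) = A).
  { rewrite subst_comp. transitivity (subst Var A); [| apply subst_Var].
    apply subst_ext. intros y _.
    unfold comp, shift, ren. simpl. destruct (in_dec Nat.eq_dec (y + M) (vars_cl c)) as [Hc |].
    - apply HM in Hc. lia.
    - f_equal. lia. }
  assert (HrenH : subst ren (fst c) = H').
  { destruct c as [h b]. injection E1 as <- _. apply subst_ext. intros x Hx. unfold ren.
    destruct (in_dec Nat.eq_dec x (vars_cl (h, b))) as [| Hn]; [reflexivity |].
    exfalso. apply Hn, in_or_app. left. exact Hx. }
  destruct (@mgu_rename th ren ren' (subst (shift M) A) (fst c)
              (vars_cl c ++ vars (subst (shift M) A))) as [theta [Htheta Hon]].
  - rewrite HrenA, HrenH. exact Hmgu.
  - intros x [Hx | Hx]; apply in_or_app; [| left; apply in_or_app; left; exact Hx].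
    right. exact Hx.
  - intros x Hx. apply in_app_or in Hx as [Hx | Hx]; unfold ren.
    + destruct (in_dec Nat.eq_dec x (vars_cl c)) as [_ | Hn]; [| contradiction].
      destruct (variant_cl_renaming E1 E2 x Hx) as [z [-> [Er Hz]]]. simpl. unfold ren'.
      destruct (in_dec Nat.eq_dec z (vars_cl (H', B'))); [exact Er | contradiction].
    + destruct (Hshift x Hx) as [y [-> Hy]].
      destruct (in_dec Nat.eq_dec (y + M) (vars_cl c)) as [Hc |].
      { apply HM in Hc. lia. }
      simpl. unfold ren'. replace (y + M - M) with y by lia.
      destruct (in_dec Nat.eq_dec y (vars_cl (H', B'))) as [Hc |]; [| reflexivity].
      exfalso. exact (Hdis y Hc Hy).
  - exists M, theta. split; [| split; [exact Htheta |]].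
    + intros x Hx Hc. destruct (Hshift x Hx) as [y [-> _]]. apply HM in Hc. lia.
    + intros x Hx. rewrite Hon by (apply in_or_app; left; exact Hx). unfold ren.
      destruct (in_dec Nat.eq_dec x (vars_cl c)); [reflexivity | contradiction].
Qed.

Definition solve_calls_linear (Pr : program) (d n : nat) (G : list term) : Prop :=
  forall m Q u G' th, m <= n -> ld_derivn Pr m G (solve_at Q u :: G') th -> is_varseq d u.

(* Condition (i), first form, for the three solve-atoms of the bodies. *)
Definition solve_args_free (D : demi) : Prop :=
  args_free_after D (cl2 D) (DD1 D) (tt3 D) (dn D) /\
  args_free_after D (cl2 D) (DD1 D ++ [solve_at (Var (a2 D)) (tt3 D)] ++ DD2 D)
    (tt4 D) (dn D) /\
  args_free_after D (cl3 D) (DD3 D ++ [clause_at (Var (a3 D)) (Var (b3 D)) (ss D)] ++ DD4 D)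
    (tt6 D) (dn D).

Lemma restricted_cases (D : demi) (v : list term) :
  restricted_i D -> restricted_query D v ->
  (is_varseq (dn D) (tt1 D) /\ is_varseq (dn D) (tt2 D) /\ is_varseq (dn D) (tt5 D)) \/
  (solve_args_free D /\ is_varseq (dn D) v).
Proof.
  intros [[Ha2 [Hb2 [_ Hb3]]] | Hheads] [Hv | Hheads'].
  - right. exact (conj (conj Ha2 (conj Hb2 Hb3)) Hv).
  - left. exact Hheads'.
  - left. tauto.
  - left. exact Hheads'.
Qed.

Lemma in_vars_cl_body (c : clause) (l : list term) (x : nat) :
  (forall t, In t l -> In t (snd c)) -> In x (varsl l) -> In x (vars_cl c).
Proof.
  intros Hl Hx. apply in_flat_map in Hx. destruct Hx as [t [Ht Hx]].
  apply in_or_app. right. apply in_flat_map. exists t. split; [apply Hl, Ht | exact Hx].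
Qed.

Section MetaInterpreter.

Variables (D : demi) (P : program).
Hypothesis HD : is_demi D.

Lemma solve_clauses_heads (c : clause) :
  In c (solve_clauses D) ->
  exists X tt, fst c = solve_at X tt /\ length tt = dn D /\
    (tt = tt1 D \/ tt = tt2 D \/ tt = tt5 D).
Proof.
  destruct HD as [L1 [L2 [_ [_ [L5 _]]]]].
  intros [<- | [<- | [<- | []]]]; simpl; eauto 7.
Qed.

Lemma solve_clause_variant_args (c : clause) (H : term) (ts B : list term) :
  In c (solve_clauses D) -> variant_cl c (solve_at H ts, B) ->
  length ts = dn D /\
  (is_varseq (dn D) (tt1 D) /\ is_varseq (dn D) (tt2 D) /\ is_varseq (dn D) (tt5 D) ->
   is_varseq (dn D) ts).
Proof.
  intros Hc [s [r [E1 E2]]].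
  destruct (solve_clauses_heads Hc) as [X [tt [Efst [Hlt Htt]]]].
  destruct c as [hc bc]. simpl in Efst. subst hc.
  injection E1 as _ Ets _. injection E2 as _ Ett _.
  split.
  - rewrite <- Ets, length_map. exact Hlt.
  - intros Hheads. apply (is_varseq_map_inv r). rewrite Ett.
    destruct Htt as [-> | [-> | ->]]; apply Hheads.
Qed.

Lemma in_prog_cases (c : clause) :
  In c (prog D P) ->
  In c (solve_clauses D) \/ In c (aux D) \/
  exists c0, c = (clause_at (fst c0) (enc_body (snd c0)) (ce_args D P c0), []).
Proof.
  unfold prog. rewrite !in_app_iff. intros [Hc | [Hc | Hc]]; [left | right; left | right; right];
    [exact Hc | exact Hc |].
  apply in_map_iff in Hc. destruct Hc as [c0 [<- _]]. eauto.
Qed.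

Lemma aux_clause_not_solve (c : clause) :
  In c (aux D) -> atom_with not_solve (fst c) /\ Forall (atom_with not_solve) (snd c).
Proof.
  intros Hc. destruct HD as [_ [_ [_ [_ [_ [_ [_ [_ [_ [_ [_ Haux]]]]]]]]]]].
  destruct (Haux c Hc) as [Hh [Hhs Hb]].
  split; [exact (object_atom_not_solve Hh Hhs) |].
  apply Forall_forall. intros b Hb'. destruct (Hb b Hb'). apply object_atom_not_solve; assumption.
Qed.

Lemma cd_atoms_not_solve : Forall (atom_with not_solve) (cd_atoms D).
Proof.
  destruct HD as [_ [_ [_ [_ [_ [_ [_ [_ [_ [_ [Hcd _]]]]]]]]]]].
  apply Forall_forall. intros C HC. destruct (Hcd C HC). apply object_atom_not_solve; assumption.
Qed.

Lemma prog_heads_atoms (c : clause) : In c (prog D P) -> is_atom (fst c).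
Proof.
  intros Hc. destruct (in_prog_cases Hc) as [Hs | [Ha | [c0 ->]]].
  - destruct (solve_clauses_heads Hs) as [X [tt [-> _]]]. unfold solve_at, is_atom. eauto.
  - destruct (aux_clause_not_solve _ Ha) as [[f [args [-> _]]] _]. unfold is_atom. eauto.
  - unfold clause_at, is_atom. simpl. eauto.
Qed.

Lemma prog_bodies_not_solve (c : clause) (f : nat) (args : list term) :
  In c (prog D P) -> fst c = Fn f args -> not_solve f (length args) ->
  Forall (atom_with not_solve) (snd c).
Proof.
  intros Hc Ef Hf. destruct (in_prog_cases Hc) as [Hs | [Ha | [c0 ->]]].
  - destruct (solve_clauses_heads Hs) as [X [tt [E _]]]. rewrite Ef in E.
    injection E as ->. contradiction.
  - exact (proj2 (aux_clause_not_solve _ Ha)).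
  - constructor.
Qed.

Lemma prog_bodies_solve_arity (c : clause) :
  In c (prog D P) -> Forall (atom_with (solve_arity (dn D))) (snd c).
Proof.
  assert (Hw : forall l, Forall (atom_with not_solve) l ->
             Forall (atom_with (solve_arity (dn D))) l).
  { intros l. apply Forall_impl. intros a. apply atom_with_weaken.
    intros f n Hf Ef. contradiction. }
  assert (Hsolve : forall X tt, length tt = dn D ->
             atom_with (solve_arity (dn D)) (solve_at X tt)).
  { intros X tt Htt. exists solve_sym, (X :: tt). split; [reflexivity |].
    intros _. simpl. rewrite Htt. reflexivity. }
  pose proof cd_atoms_not_solve as Hcd. unfold cd_atoms in Hcd. rewrite !Forall_app in Hcd.
  destruct Hcd as [H1 [H2 [H3 [H4 [H5 [H6 H7]]]]]].
  destruct HD as [_ [_ [L3 [L4 [_ [L6 _]]]]]].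
  intros Hc. destruct (in_prog_cases Hc) as [[<- | [<- | [<- | []]]] | [Ha | [c0 ->]]]; simpl.
  - exact (Hw _ H1).
  - repeat first [apply Forall_app; split | apply Forall_cons]; auto.
  - repeat first [apply Forall_app; split | apply Forall_cons]; auto.
    exists clause_sym, (Var (a3 D) :: Var (b3 D) :: ss D). split; [reflexivity | discriminate].
  - exact (Hw _ (proj2 (aux_clause_not_solve _ Ha))).
  - constructor.
Qed.

Lemma not_solve_never_calls_solve (n : nat) (G : list term) (Q : term) (u G' : list term)
    (th : subst_t) :
  Forall (atom_with not_solve) G -> ~ ld_derivn (prog D P) n G (solve_at Q u :: G') th.
Proof.
  intros HG Hd.
  pose proof (ld_derivn_Forall_atom_with prog_heads_atoms prog_bodies_not_solve Hd HG) as HX.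
  inversion HX as [| ? ? [f [args [E Hf]]] _]; subst. injection E as <- _.
  apply Hf. reflexivity.
Qed.

Lemma solve_call_arity (n : nat) (Q0 : term) (v : list term) (Q : term) (u G : list term)
    (th : subst_t) :
  length v = dn D -> ld_derivn (prog D P) n [solve_at Q0 v] (solve_at Q u :: G) th ->
  length u = dn D.
Proof.
  intros Hv Hd.
  assert (Hstart : Forall (atom_with (solve_arity (dn D))) [solve_at Q0 v]).
  { constructor; [| constructor]. exists solve_sym, (Q0 :: v).
    split; [reflexivity | intros _; simpl; rewrite Hv; reflexivity]. }
  pose proof (ld_derivn_Forall_atom_with prog_heads_atoms
                (fun c _ _ Hc _ _ => prog_bodies_solve_arity Hc) Hd Hstart) as HX.
  inversion HX as [| ? ? [f [args [E Hf]]] _]; subst. injection E as <- <-.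
  simpl in Hf. injection (Hf eq_refl) as Hu. exact Hu.
Qed.

Lemma solve_calls_linear_not_solve (n : nat) (G : list term) :
  Forall (atom_with not_solve) G -> solve_calls_linear (prog D P) (dn D) n G.
Proof.
  intros HG m Q u G' th _ Hd. exfalso. exact (not_solve_never_calls_solve HG Hd).
Qed.

Lemma solve_calls_linear_app (n : nat) (Gpre : list term) (S : term) (Gpost : list term) :
  solve_calls_linear (prog D P) (dn D) n Gpre ->
  (forall k rho, ld_refute (prog D P) k Gpre (S :: Gpost) rho ->
     solve_calls_linear (prog D P) (dn D) n [subst rho S]) ->
  Forall (atom_with not_solve) Gpost ->
  solve_calls_linear (prog D P) (dn D) n (Gpre ++ S :: Gpost).
Proof.
  intros Hpre HS Hpost m Q u G' th Hm Hd.
  destruct (ld_split Gpre (S :: Gpost) Hd) as [[G'' Hin] | [k [rho [tau [Hk [Href Hd']]]]]].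
  - exact (Hpre m Q u G'' th Hm Hin).
  - rewrite map_cons in Hd'.
    destruct (ld_split [subst rho S] (map (subst rho) Gpost) Hd')
      as [[G'' Hin] | [k' [rho' [tau' [_ [_ Hd'']]]]]].
    + refine (HS k rho Href (m - k) Q u G'' tau _ Hin). lia.
    + exfalso. rewrite map_subst_comp in Hd''.
      exact (not_solve_never_calls_solve (Forall_atom_with_map _ Hpost) Hd'').
Qed.

Lemma solve_resolves_with_solve_clause (c : clause) (s : subst_t) (H' : term) (B' : list term)
    (Q : term) (w : list term) (th : subst_t) :
  In c (prog D P) -> cl_inst s c = (H', B') -> unifier th (solve_at Q w) H' ->
  In c (solve_clauses D).
Proof.
  intros Hc E Hunif. destruct c as [h b]. injection E as <- _.
  destruct (in_prog_cases Hc) as [Hs | [Ha | [c0 E]]]; [exact Hs | exfalso | exfalso].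
  - destruct (aux_clause_not_solve _ Ha) as [[f [args [Eh Hf]]] _]. simpl in Eh. subst h.
    injection Hunif as Ef _. exact (Hf (eq_sym Ef)).
  - injection E as -> _. discriminate Hunif.
Qed.

Hypothesis Hfree : solve_args_free D.

Lemma args_free_after_step (c : clause) (pre tt : list term) (m : nat) (s r : subst_t)
    (H' : term) (B' : list term) (Q : term) (w : list term) (th : subst_t)
    (k : nat) (R : list term) (rho : subst_t) :
  args_free_after D c pre tt m ->
  cl_inst s c = (H', B') -> cl_inst r (H', B') = c ->
  is_varseq (dn D) w ->
  disjoint (vars_cl (H', B')) (vars (solve_at Q w)) ->
  mgu th (solve_at Q w) H' ->
  (forall x, In x (varsl pre) -> In x (vars_cl c)) ->
  (forall x, In x (varsl tt) -> In x (vars_cl c)) ->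
  ld_refute (prog D P) k (map (subst (comp s th)) pre) R rho ->
  (forall x, In x (varsl (map (subst (comp s th)) tt)) -> In x (varsl R)) ->
  is_varseq m (map (subst rho) (map (subst (comp s th)) tt)).
Proof.
  intros Hafter E1 E2 Hw Hdis Hmgu Hpre Htt Href HttR.
  destruct (standardize_apart E1 E2 Hdis Hmgu) as [M [theta [Hdis' [Htheta Hon]]]].
  assert (Hinst : forall l, (forall x, In x (varsl l) -> In x (vars_cl c)) ->
            map (subst theta) l = map (subst (comp s th)) l).
  { intros l Hl. apply map_subst_ext. intros x Hx. apply Hon, Hl, Hx. }
  set (Gp := map (subst (comp s th)) pre).
  set (sg := fun x => if in_dec Nat.eq_dec x (varsl Gp) then rho x else Var x).
  assert (Hans : comp_answer (prog D P) (map (subst theta) pre) sg).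
  { rewrite (Hinst pre Hpre). exists rho.
    split; [exists k; exact (ld_refute_derivn Href) |].
    intros x. unfold sg. destruct (in_dec Nat.eq_dec x (varsl Gp)); tauto. }
  assert (Hw' : is_varseq (dn D) (map (subst (shift M)) w)).
  { assert (Eback : map (subst (comp (shift M) (fun y => Var (y - M)))) w = w).
    { rewrite <- (map_subst_Var w) at 2. apply map_subst_ext.
      intros y _. unfold comp, shift. simpl. f_equal. lia. }
    apply (is_varseq_map_inv (fun y => Var (y - M))).
    rewrite map_subst_comp, Eback. exact Hw. }
  pose proof (Hafter P (subst (shift M) Q) (map (subst (shift M)) w) theta sg Hw' Hdis'
                Htheta Hans) as Hres.
  rewrite <- map_map, (Hinst tt Htt) in Hres.
  apply (ld_refute_keeps_varseq _ sg Href); [| | exact HttR | exact Hres];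
    intros x Hx; unfold sg; destruct (in_dec Nat.eq_dec x (varsl Gp)); tauto.
Qed.

Section ResolutionStep.

Variables (n : nat) (c : clause) (s r : subst_t) (H' : term) (B' : list term)
  (Q : term) (w : list term) (th : subst_t).
Hypothesis IH :
  forall Q w, is_varseq (dn D) w -> solve_calls_linear (prog D P) (dn D) n [solve_at Q w].
Hypotheses (E1 : cl_inst s c = (H', B')) (E2 : cl_inst r (H', B') = c).
Hypothesis Hw : is_varseq (dn D) w.
Hypothesis Hdis : disjoint (vars_cl (H', B')) (vars (solve_at Q w)).
Hypothesis Hmgu : mgu th (solve_at Q w) H'.

Lemma solve_atom_calls_linear (pre : list term) (X : term) (tt post : list term) :
  args_free_after D c pre tt (dn D) -> snd c = pre ++ solve_at X tt :: post ->
  forall k rho Gpost,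
    ld_refute (prog D P) k (map (subst (comp s th)) pre)
      (subst (comp s th) (solve_at X tt) :: Gpost) rho ->
    solve_calls_linear (prog D P) (dn D) n [subst rho (subst (comp s th) (solve_at X tt))].
Proof.
  intros Hafter Hbody k rho Gpost Href. apply IH.
  refine (args_free_after_step Hafter E1 E2 Hw Hdis Hmgu _ _ Href _).
  - intros x Hx. apply (in_vars_cl_body c pre x); [| exact Hx].
    intros t Ht. rewrite Hbody. apply in_or_app. left. exact Ht.
  - intros x Hx. apply (in_vars_cl_body c [solve_at X tt] x).
    + intros t [<- | []]. rewrite Hbody. apply in_or_app. right. left. reflexivity.
    + simpl. rewrite app_nil_r. apply in_or_app. right. exact Hx.
  - intros x Hx. apply in_or_app. left. simpl. apply in_or_app. right. exact Hx.
Qed.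

Lemma solve_clause_body_calls_linear :
  In c (solve_clauses D) ->
  solve_calls_linear (prog D P) (dn D) n (map (subst (comp s th)) (snd c)).
Proof.
  pose proof cd_atoms_not_solve as Hcd. unfold cd_atoms in Hcd. rewrite !Forall_app in Hcd.
  destruct Hcd as [H1 [H2 [H3 [H4 [H5 [H6 H7]]]]]].
  destruct Hfree as [Ha2 [Hb2 Hb3]].
  intros [Ec | [Ec | [Ec | []]]]; rewrite <- Ec.
  - exact (solve_calls_linear_not_solve (Forall_atom_with_map _ H1)).
  - rewrite Ec in Ha2, Hb2.
    replace (snd (cl2 D)) with ((DD1 D ++ solve_at (Var (a2 D)) (tt3 D) :: DD2 D) ++
                                 solve_at (Var (b2 D)) (tt4 D) :: CC2 D)
      by (simpl; rewrite <- app_assoc; reflexivity).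
    rewrite map_app, map_cons.
    apply solve_calls_linear_app; [| | exact (Forall_atom_with_map _ H2)].
    + rewrite map_app, map_cons.
      apply solve_calls_linear_app; [| | exact (Forall_atom_with_map _ H5)].
      * exact (solve_calls_linear_not_solve (Forall_atom_with_map _ H4)).
      * intros k rho Href. refine (solve_atom_calls_linear _ Ha2 _ Href).
        rewrite <- Ec. reflexivity.
    + intros k rho Href. refine (solve_atom_calls_linear _ Hb2 _ Href).
      rewrite <- Ec. simpl. rewrite <- app_assoc. reflexivity.
  - rewrite Ec in Hb3.
    replace (snd (cl3 D)) with
      ((DD3 D ++ clause_at (Var (a3 D)) (Var (b3 D)) (ss D) :: DD4 D) ++
       solve_at (Var (b3 D)) (tt6 D) :: CC3 D)
      by (simpl; rewrite <- app_assoc; reflexivity).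
    rewrite map_app, map_cons.
    apply solve_calls_linear_app; [| | exact (Forall_atom_with_map _ H3)].
    + apply solve_calls_linear_not_solve, Forall_atom_with_map.
      apply Forall_app. split; [exact H6 | constructor; [| exact H7]].
      exists clause_sym, (Var (a3 D) :: Var (b3 D) :: ss D). split; [reflexivity | discriminate].
    + intros k rho Href. refine (solve_atom_calls_linear _ Hb3 _ Href).
      rewrite <- Ec. simpl. rewrite <- app_assoc. reflexivity.
Qed.

End ResolutionStep.

Lemma solve_calls_linear_from_varseq (n : nat) (Q : term) (w : list term) :
  is_varseq (dn D) w -> solve_calls_linear (prog D P) (dn D) n [solve_at Q w].
Proof.
  revert Q w. induction n as [| n IH]; intros Q w Hw [| m] Q' u G' tau Hm Hd; try lia.
  1, 2: inversion Hd; subst; exact Hw.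
  inversion Hd as [| ? ? G1 ? th sg Hstep Hrest]; subst.
  inversion Hstep as [A0 G0 c H' B' th0 Hc [s [r [E1 E2]]] Hdis Hmgu]. subst A0 G0 G1 th0.
  assert (EB : B' = map (subst s) (snd c)) by (destruct c; injection E1 as _ <-; reflexivity).
  rewrite app_nil_r, EB, map_subst_comp in Hrest.
  refine (solve_clause_body_calls_linear IH E1 E2 Hw _ Hmgu _ _ Hrest); [| | lia].
  - intros x Hx Hw'. apply (Hdis x Hx). simpl. rewrite app_nil_r. exact Hw'.
  - exact (solve_resolves_with_solve_clause Hc E1 (proj1 Hmgu)).
Qed.

End MetaInterpreter.

Unset Implicit Arguments.

Theorem mainTheorem10 (D : demi) (P : program) (Q0 : term) (v : list term) :
  is_demi D -> restricted D ->
  object_program P ->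
  is_atom Q0 -> object_term Q0 ->
  length v = dn D ->
  restricted_query D v ->
  forall (Q : term) (u : list term),
    call_set (prog D P) [solve_at Q0 v] (solve_at Q u) ->
    forall (c : clause) (H : term) (ts B : list term),
      In c (solve_clauses D) ->
      variant_cl c (solve_at H ts, B) ->
      disjoint (vars_cl (solve_at H ts, B)) (vars (solve_at Q u)) ->
      exists sigma : subst_t, map (subst sigma) u = map (subst sigma) ts.
Proof.
  intros HD [Hi _] _ _ _ Hlv Hq Q u [A' [G [th [[n Hd] [s0 [r0 [<- _]]]]]]] c H ts B Hc
    Hvar Hdis.
  change (subst s0 (solve_at Q u)) with (solve_at (subst s0 Q) (map (subst s0) u)) in Hd.
  pose proof (solve_call_arity HD Hlv Hd) as Hlu. rewrite length_map in Hlu.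
  destruct (solve_clause_variant_args HD Hc Hvar) as [Hlts Hts].
  assert (Hdis' : forall x, In x (varsl u) -> ~ In x (varsl ts)).
  { intros x Hxu Hxts. apply (Hdis x).
    - apply in_or_app. left. simpl. apply in_or_app. right. exact Hxts.
    - simpl. apply in_or_app. right. exact Hxu. }
  destruct (restricted_cases Hi Hq) as [Hheads | [Hfree Hv]].
  - destruct (varseq_unifiable _ (Hts Hheads) Hlu (fun x Hxts Hxu => Hdis' x Hxu Hxts))
      as [sg Hsg].
    exists sg. symmetry. exact Hsg.
  - pose proof (solve_calls_linear_from_varseq HD Hfree (Q := Q0) Hv (le_n n) Hd) as Hu.
    exact (varseq_unifiable _ (is_varseq_map_inv _ _ Hu) Hlts Hdis').
Qed.
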